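(* Let $\mathcal D=V(\mathcal I)$ where $\mathcal I$ is a finite tuple-independent probabilistic database and $V$ is a monotone view. Then $\mathcal D\in\mathsf{sjfCQ}(\mathsf{TI}_{\mathsf{fin}})$.
   Context: Fix a countably infinite universe $U$. A database schema is a finite nonempty set of relation symbols with arities; facts are $R(u_1,\dots,u_{\mathrm{ar}(R)})$ with $u_i\in U$; an instance is a finite set of facts; $\mathrm{adom}(D)$ is the set of elements of $U$ occurring in $D$. A probabilistic database (PDB) is a discrete probability space $(\mathbb D,P)$ with $\mathbb D$ a nonempty countable set of instances; it is finite if $\mathbb D$ is finite. A PDB $\mathcal I$ is tuple-independent if for all pairwise distinct facts $f_1,\dots,f_k$, $\Pr(f_1\in I,\dots,f_k\in I)=\prod_i\Pr(f_i\in I)$; $\mathsf{TI}_{\mathsf{fin}}$ is the class of finite tuple-independent PDBs. A view is a function from instances of an input schema to instances of an output schema; it is monotone if $D\subseteq D'$ implies $V(D)\subseteq V(D')$. The image of a PDB $(\mathbb D,P)$ under $V$ is the PDB on $V(\mathbb D)$ with $P'(\{D'\})=P(\{D:V(D)=D'\})$. A self-join free conjunctive query is a first-order formula built from relational atoms $R(\bar u)$ ($\bar u$ variables or constants) and equality atoms using only $\exists$ and $\wedge$, in which each relation symbol occurs at most once; it is evaluated under active domain semantics. An sjfCQ-view consists of one such formula $\Phi_R(x_1,\dots,x_{\mathrm{ar}(R)})$ per output relation $R$, mapping $D$ to the instance of all $R(\bar a)$ with $\bar a$ over $\mathrm{adom}(D)\cup\mathrm{adom}(\Phi_R)$ and $D\models\Phi_R[\bar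 a]$. $\mathsf{sjfCQ}(\mathsf{TI}_{\mathsf{fin}})$ is the class of images of finite TI-PDBs under sjfCQ-views. *)

From HB Require Import structures.
From mathcomp Require Import all_boot all_order all_algebra.
From mathcomp Require Import finmap.
From mathcomp Require Import reals.

Set Implicit Arguments.
Unset Strict Implicit.
Unset Printing Implicit Defensive.

Import Order.TTheory GRing.Theory Num.Theory.
Local Open Scope fset_scope.
Local Open Scope ring_scope.

Notation U := nat (only parsing).

Record schema := Schema {
  rel :> finType;
  ar : rel -> nat;
  rel_nonempty : (0 < #|{: rel}|)%N }.

Definition fact (S : schema) : choiceType :=
  {R : S & (ar R).-tuple U}.
Definition inst (S : schema) : choiceType := {fset fact S}.

Definition adom (S : schema) (D : inst S) (u : U) : Prop :=
  exists2 f : fact S, f \in D & u \in tagged f.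

Record fpdb (R : realType) (X : choiceType) := FPDB {
  worlds : {fset X};
  mass : X -> R }.

Definition valid_fpdb (R : realType) (X : choiceType) (P : fpdb R X) : Prop :=
  (0 < #|` worlds P|)%N /\
  (forall x, x \in worlds P -> 0 <= mass P x) /\
  \sum_(x <- worlds P) mass P x = 1.

Definition prE (R : realType) (X : choiceType) (P : fpdb R X) (E : pred X) : R :=
  \sum_(x <- worlds P | E x) mass P x.

Definition pr (R : realType) (X : choiceType) (P : fpdb R X) (x : X) : R :=
  prE P (pred1 x).

Definition same_pdb (R : realType) (X : choiceType) (P Q : fpdb R X) : Prop :=
  forall x, pr P x = pr Q x.

(** Tuple-independence: for pairwise distinct facts f_1..f_k (i.e. a finite
    set F of facts), Pr(f_1 \in I, ..., f_k \in I) = prod_i Pr(f_i \in I). *)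
Definition tuple_independent (R : realType) (S : schema) (P : fpdb R (inst S))
  : Prop :=
  forall F : {fset fact S},
    prE P (fun D : inst S => F `<=` D) =
    \prod_(f <- F) prE P (fun D : inst S => f \in D).

Definition TI_fin (R : realType) (S : schema) (P : fpdb R (inst S)) : Prop :=
  valid_fpdb P /\ tuple_independent P.

Definition monotone_view (S T : schema) (V : inst S -> inst T) : Prop :=
  forall D D' : inst S, D `<=` D' -> V D `<=` V D'.

Definition image_pdb (R : realType) (X Y : choiceType) (V : X -> Y)
  (P : fpdb R X) : fpdb R Y :=
  {| worlds := [fset V x | x in worlds P];
     mass := fun y => prE P (fun x => V x == y) |}.

Inductive term := TVar of nat | TConst of U.

Inductive cq (S : schema) :=
  | CAtom (R : S) (ts : (ar R).-tuple term)
  | CEq (t1 t2 : term)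
  | CAnd (phi psi : cq S)
  | CEx (x : nat) (phi : cq S).

Arguments CEq {S}.

Definition term_vars (t : term) : seq nat :=
  match t with TVar x => [:: x] | TConst _ => [::] end.
Definition term_consts (t : term) : seq U :=
  match t with TVar _ => [::] | TConst c => [:: c] end.

Fixpoint fv (S : schema) (phi : cq S) : seq nat :=
  match phi with
  | CAtom _ ts => flatten (map term_vars ts)
  | CEq t1 t2 => term_vars t1 ++ term_vars t2
  | CAnd phi psi => fv phi ++ fv psi
  | CEx x phi => filter (predC1 x) (fv phi)
  end.

Fixpoint consts (S : schema) (phi : cq S) : seq U :=
  match phi with
  | CAtom _ ts => flatten (map term_consts ts)
  | CEq t1 t2 => term_consts t1 ++ term_consts t2
  | CAnd phi psi => consts phi ++ consts psi
  | CEx _ phi => consts phi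
  end.

Fixpoint rels (S : schema) (phi : cq S) : seq S :=
  match phi with
  | CAtom R _ => [:: R]
  | CEq _ _ => [::]
  | CAnd phi psi => rels phi ++ rels psi
  | CEx _ phi => rels phi
  end.

Definition self_join_free (S : schema) (phi : cq S) : bool := uniq (rels phi).

Definition eval_term (nu : nat -> U) (t : term) : U :=
  match t with TVar x => nu x | TConst c => c end.

Definition upd (nu : nat -> U) (x : nat) (a : U) : nat -> U :=
  fun y => if y == x then a else nu y.

Fixpoint sat (S : schema) (D : inst S) (dom : U -> Prop) (nu : nat -> U)
  (phi : cq S) : Prop :=
  match phi with
  | CAtom R ts =>
      (Tagged (fun R : S => (ar R).-tuple U) (map_tuple (eval_term nu) ts)
        : fact S) \in D
  | CEq t1 t2 => eval_term nu t1 = eval_term nu t2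
  | CAnd phi psi => sat D dom nu phi /\ sat D dom nu psi
  | CEx x phi => exists2 a, dom a & sat D dom (upd nu x a) phi
  end.

Definition adom_sem (S : schema) (D : inst S) (Phi : cq S) (u : U) : Prop :=
  adom D u \/ u \in consts Phi.

(** The assignment x_i |-> a_i (variables x_1..x_n are TVar 0..TVar n-1). *)
Definition tuple_asg (n : nat) (a : n.-tuple U) : nat -> U :=
  fun i => nth 0%N a i.

Definition sjfcq_formula (S : schema) (n : nat) (Phi : cq S) : Prop :=
  self_join_free Phi /\ (forall x, x \in fv Phi -> (x < n)%N).

Definition sjfCQ_view (S T : schema) (V : inst S -> inst T) : Prop :=
  exists Phi : T -> cq S,
    (forall R : T, sjfcq_formula (ar R) (Phi R)) /\
    forall (D : inst S) (f : fact T),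
      f \in V D <->
      ((forall u, u \in tagged f -> adom_sem D (Phi (tag f)) u) /\
       sat D (adom_sem D (Phi (tag f))) (tuple_asg (tagged f)) (Phi (tag f))).

Definition in_sjfCQ_TIfin (R : realType) (T : schema) (P : fpdb R (inst T))
  : Prop :=
  exists (S : schema) (I : fpdb R (inst S)) (V : inst S -> inst T),
    TI_fin I /\ sjfCQ_view V /\ same_pdb (image_pdb V I) P.

(** Encode every world [W] of [I] by its index [w = widx W] and let the new
    probabilistic database contain, deterministically, the facts
    [out_fact a w] for every output fact [a] of [V W], [guard_fact f w 1] for
    every fact [f] occurring in some world, [guard_fact f w 0] whenever
    [f \notin W], and [mark_fact f 0]; the only random facts are the
    [mark_fact f 1], present exactly when [f \in D], so tuple independence is
    inherited from [I].  The self-join free query for an output relation [R] is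
    [exists w, Out_R(x, w) /\ /\_f exists z, Guard_f(w, z) /\ Mark_f(z)]:
    the conjunct for [f] says "[f] in [W_w] implies [f] in [D]", so on the
    encoding of a world [D] the query returns the union of the [V W] over the
    worlds [W] contained in [D], which is [V D] by monotonicity. *)
From mathcomp Require Import all_boot all_order all_algebra finmap reals boolp.

Set Implicit Arguments.
Unset Strict Implicit.
Unset Printing Implicit Defensive.

Import GRing.Theory Num.Theory.
Local Open Scope fset_scope.
Local Open Scope ring_scope.

Definition fact_of (S : schema) (r : S) (s : seq U) : fact S :=
  Tagged (fun r => (ar r).-tuple U) (insubd (nseq_tuple (ar r) 0%N) s).

Lemma fact_ofK (S : schema) (f : fact S) : fact_of (tag f) (tagged f) = f.
Proof.
by case: f => r t; congr Tagged; apply: val_inj; rewrite val_insubd size_tuple eqxx.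
Qed.

Lemma Tagged_fact_of (S : schema) (r : S) (t : (ar r).-tuple U) :
  Tagged (fun r => (ar r).-tuple U) t = fact_of r t.
Proof. exact: (esym (fact_ofK (Tagged _ t))). Qed.

Lemma fact_of_inj (S : schema) (r r' : S) s s' :
  size s = ar r -> size s' = ar r' -> fact_of r s = fact_of r' s' -> r = r' /\ s = s'.
Proof.
move=> size_s size_s' /(congr1 (fun f => (tag f, tval (tagged f)))).
by rewrite /= !val_insubd size_s size_s' !eqxx => -[].
Qed.

Lemma mem_fact_of (S : schema) (r : S) s u :
  size s = ar r -> (u \in tagged (fact_of r s)) = (u \in s).
Proof.
move=> size_s; transitivity (u \in tval (tagged (fact_of r s))) => //.
by rewrite /= val_insubd size_s eqxx.
Qed.

Section ImagePDB.
Variables (R : realType) (X Y : choiceType).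
Implicit Types (P : fpdb R X) (E : pred X).

Lemma eq_prE P E E' : {in worlds P, E =1 E'} -> prE P E = prE P E'.
Proof.
move=> eqE; rewrite /prE big_seq_cond [RHS]big_seq_cond.
by apply: eq_bigl => x; case xP: (x \in worlds P); rewrite //= eqE.
Qed.

Lemma prE_eq0 P E : {in worlds P, forall x, ~~ E x} -> prE P E = 0.
Proof. by move=> notE; rewrite /prE big1_seq // => x /andP[Ex /notE]; rewrite Ex. Qed.

Lemma prE_image (e : X -> Y) P (E : pred Y) :
  prE (image_pdb e P) E = prE P (fun x => E (e x)).
Proof.
rewrite /prE /= big_mkcond [RHS]big_mkcond (partition_big_imfset _ e).
apply: eq_bigr => y _; case Ey: (E y).
  by apply: eq_bigr => x /eqP->; rewrite Ey.
by rewrite big1 // => x /eqP->; rewrite Ey.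
Qed.

Lemma valid_image (e : X -> Y) P : valid_fpdb P -> valid_fpdb (image_pdb e P).
Proof.
move=> [worlds_gt0 [mass_ge0 mass1]]; split; [|split].
- move: worlds_gt0; rewrite !cardfs_gt0 => /fset0Pn[x xP].
  by apply/fset0Pn; exists (e x); apply: in_imfset.
- by move=> y _; rewrite /= /prE big_seq_cond sumr_ge0 // => x /andP[/mass_ge0].
- by rewrite -mass1; exact: (prE_image e P predT).
Qed.

End ImagePDB.

Section Embedding.
Variables (R : realType) (S S' : schema) (J : finType).
Variables (a : J -> fact S) (e : J -> fact S') (K : {fset fact S'}).
Hypotheses (a_inj : injective a) (e_inj : injective e).
Hypothesis e_notin_K : forall j, e j \notin K.

Definition embed (D : inst S) : inst S' := [fset e j | j in J & a j \in D] `|` K.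

Lemma in_embed D f :
  (f \in embed D) = (f \in K) || [exists j, (f == e j) && (a j \in D)].
Proof.
rewrite in_fsetU orbC; congr (_ || _); apply/imfsetP/existsP => /=.
  by case=> j jD ->; exists j; rewrite eqxx.
by case=> j /andP[/eqP-> jD]; exists j.
Qed.

Lemma in_embed_image D j : (e j \in embed D) = (a j \in D).
Proof.
rewrite in_embed (negbTE (e_notin_K j)); apply/existsP/idP => [[i]|jD].
  by case/andP=> /eqP/e_inj->.
by exists j; rewrite eqxx.
Qed.

Lemma tuple_independent_embed (P : fpdb R (inst S)) :
  valid_fpdb P -> tuple_independent P -> tuple_independent (image_pdb embed P).
Proof.
move=> [_ [_ mass1]] indepP F; rewrite prE_image.
under eq_bigr do rewrite prE_image.
have [F_covered|/allPn[f0 f0F f0_out]] :=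
  boolP (all (fun f => (f \in K) || (f \in codom e)) F); last first.
  have f0_never D : (f0 \in embed D) = false.
    apply: contraNF f0_out; rewrite in_embed.
    by case/orP=> [->//|/existsP[j /andP[/eqP-> _]]]; rewrite codom_f orbT.
  rewrite (big_fsetD1 f0) //= [X in _ = X * _]prE_eq0 ?mul0r => [|D _]; last first.
    by rewrite f0_never.
  by apply: prE_eq0 => D _; apply/fsubsetP => /(_ f0 f0F); rewrite f0_never.
have F_uncertain : [fset f in F | f \notin K] = [fset e j | j in J & e j \in F].
  apply/fsetP => f; rewrite !inE /=; apply/andP/imfsetP => [[fF fK]|[j /= jF ->]].
    case/orP: (allP F_covered f fF) => [fK'|/codomP[j fj]]; first by rewrite fK' in fK.
    by exists j => //; rewrite inE -fj.
  by rewrite inE in jF; rewrite jF e_notin_K.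
have prE_K f : f \in K -> prE P (fun D => f \in embed D) = 1.
  by move=> fK; rewrite -mass1 /prE; apply: eq_bigl => D; rewrite in_embed fK.
pose G := [fset a j | j in J & e j \in F].
have F_embed D : (F `<=` embed D) = (G `<=` D).
  apply/fsubsetP/fsubsetP => [FD _ /imfsetP[j /= jF ->]|GD f fF].
    by rewrite -in_embed_image FD.
  have /orP[fK|/codomP[j fj]] := allP F_covered f fF; first by rewrite in_embed fK.
  by rewrite fj in_embed_image GD // in_imfset // inE -fj.
rewrite (eq_prE (fun D _ => F_embed D)) indepP big_imfset /=; last first.
  by move=> ? ? _ _ /a_inj.
rewrite (big_fsetID _ (mem K)) big1_fset => [|f /[!inE] /andP[_ fK] _]; last first.
  exact: prE_K.
rewrite F_uncertain big_imfset /=; last by move=> ? ? _ _ /e_inj.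
by rewrite mul1r; apply: eq_bigr => j _; apply: eq_prE => D _; rewrite in_embed_image.
Qed.

Lemma TI_fin_embed (P : fpdb R (inst S)) : TI_fin P -> TI_fin (image_pdb embed P).
Proof.
by case=> validP indepP; split; [exact: valid_image | exact: tuple_independent_embed].
Qed.

End Embedding.

Lemma sat_atom (S : schema) D dom nu (r : S) (ts : (ar r).-tuple term) :
  sat D dom nu (CAtom ts) = (fact_of r (map_tuple (eval_term nu) ts) \in D).
Proof. by rewrite /= Tagged_fact_of. Qed.

Lemma map_eval_upd_vars n (t : n.-tuple U) w :
  map_tuple (eval_term (upd (tuple_asg t) n w)) [tuple of TVar n :: [tuple TVar i | i < n]] =
  [tuple of w :: t].
Proof.
apply: val_inj; rewrite /= {1}/upd eqxx; congr cons.
rewrite -map_comp -[RHS]map_tnth_enum; apply: eq_map => i /=.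
by rewrite /upd ltn_eqF // (tnth_nth 0%N).
Qed.

Definition cq_true (S : schema) : cq S := CEq (TConst 0) (TConst 0).

Definition cq_all (S : schema) (X : Type) (F : X -> cq S) (xs : seq X) : cq S :=
  foldr (fun x phi => CAnd (F x) phi) (cq_true S) xs.

Section BigConjunction.
Variables (S : schema) (X : eqType) (F : X -> cq S).

Lemma sat_cq_all D dom nu xs :
  sat D dom nu (cq_all F xs) <-> forall x, x \in xs -> sat D dom nu (F x).
Proof.
elim: xs => [|x xs IHxs] //=; rewrite IHxs.
split=> [[Fx Fxs] y|Fxxs]; first by rewrite inE => /predU1P[->|/Fxs].
by split=> [|y y_xs]; apply: Fxxs; rewrite inE ?eqxx ?y_xs ?orbT.
Qed.

Lemma rels_cq_all xs : rels (cq_all F xs) = flatten [seq rels (F x) | x <- xs].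
Proof. by elim: xs => //= x xs ->. Qed.

Lemma fv_cq_all xs : fv (cq_all F xs) = flatten [seq fv (F x) | x <- xs].
Proof. by elim: xs => //= x xs ->. Qed.

End BigConjunction.

Definition cq_view_cond (S T : schema) (Phi : T -> cq S) (D : inst S) (f : fact T) :=
  (forall u, u \in tagged f -> adom_sem D (Phi (tag f)) u) /\
  sat D (adom_sem D (Phi (tag f))) (tuple_asg (tagged f)) (Phi (tag f)).

Fixpoint words (n : nat) (L : seq U) : seq (seq U) :=
  if n is n'.+1 then [seq x :: s | x <- L, s <- words n' L] else [:: [::]].

Lemma mem_words n L s : size s = n -> all (mem L) s -> s \in words n L.
Proof.
elim: s n => [|x s IHs] [|n] //= [size_s] /andP[xL sL].
by apply/allpairsP; exists (x, s); rewrite /= xL IHs.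
Qed.

(* Under active domain semantics the answers only use the finitely many
   elements of [adom D] and of the constants of the formulas. *)
Lemma cq_view_exists (S T : schema) (Phi : T -> cq S) :
  exists V : inst S -> inst T, forall D f, f \in V D <-> cq_view_cond Phi D f.
Proof.
suff /choice[V VE] : forall D,
    exists X : inst T, forall f, f \in X <-> cq_view_cond Phi D f.
  by exists V.
move=> D; pose L := flatten [seq tval (tagged f) | f : fact S <- enum_fset D] ++
                    flatten [seq consts (Phi r) | r <- enum T].
exists [fset f in [fset fact_of r s | r in T, s in words (ar r) L]
          | `[< cq_view_cond Phi D f >]] => f.
rewrite !inE andbC; split=> [/andP[/asboolP//]|cond]; rewrite asboolT //=.
rewrite -[f]fact_ofK; apply/imfset2P; exists (tag f) => //; exists (val (tagged f)) => //.
apply: mem_words; first by rewrite size_tuple.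
apply/allP=> u uf; change (u \in L); rewrite mem_cat.
case: (cond.1 u uf) => [[g gD ug]|uPhi]; apply/orP.
  by left; apply/flattenP; exists (val (tagged g)) => //; apply: map_f.
by right; apply/flattenP; exists (consts (Phi (tag f))); rewrite // map_f ?mem_enum.
Qed.

Section Encoding.
Variables (R : realType) (S T : schema) (I : fpdb R (inst S)) (V : inst S -> inst T).

Definition world_facts : {fset fact S} := [fset f | W in worlds I, f in W].
Definition world_fact : finType := fset_sub_type world_facts.

Definition enc_rel : finType := (T + (world_fact + world_fact))%type.

Definition enc_ar (r : enc_rel) : nat :=
  match r with inl r => (ar r).+1 | inr (inl _) => 2 | inr (inr _) => 1 end.

Lemma enc_rel_nonempty : (0 < #|{: enc_rel}|)%N.
Proof. by rewrite card_sum ltn_addr // rel_nonempty. Qed.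

Definition enc_schema : schema := Schema enc_ar enc_rel_nonempty.

Definition widx (W : inst S) : U := index W (worlds I).

Definition out_fact (g : fact T) (w : U) : fact enc_schema :=
  fact_of (inl (tag g) : enc_schema) (w :: tagged g).
Definition guard_fact (s : world_fact) (w z : U) : fact enc_schema :=
  fact_of (inr (inl s) : enc_schema) [:: w; z].
Definition mark_fact (s : world_fact) (z : U) : fact enc_schema :=
  fact_of (inr (inr s) : enc_schema) [:: z].

Lemma out_fact_inj g w g' w' : out_fact g w = out_fact g' w' -> g = g' /\ w = w'.
Proof.
case: g g' => r t [r' t'] /fact_of_inj; rewrite /= !size_tuple.
by move=> /(_ erefl erefl) [[er]]; subst r'; case=> -> /val_inj->.
Qed.

Lemma guard_fact_inj s w z s' w' z' :
  guard_fact s w z = guard_fact s' w' z' -> [/\ s = s', w = w' & z = z'].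
Proof. by case/fact_of_inj=> // -[->] [-> ->]. Qed.

Lemma mark_fact_inj s z s' z' : mark_fact s z = mark_fact s' z' -> s = s' /\ z = z'.
Proof. by case/fact_of_inj=> // -[->] [->]. Qed.

Definition certain_facts : {fset fact enc_schema} :=
  [fset out_fact g (widx W) | W in worlds I, g in V W] `|`
  [fset guard_fact s (widx W) 1 | W in worlds I, s in world_fact] `|`
  [fset guard_fact s (widx W) 0 | W in worlds I, s in world_fact & val s \notin W] `|`
  [fset mark_fact s 0 | s in world_fact].

Lemma mark_fact1_notin_certain s : mark_fact s 1 \notin certain_facts.
Proof.
rewrite !in_fsetU -!orbA; apply/negP => /or4P[].
- by case/imfset2P=> W _ [g _ /(congr1 tag)].
- by case/imfset2P=> W _ [s' _ /(congr1 tag)].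
- by case/imfset2P=> W _ [s' _ /(congr1 tag)].
- by case/imfsetP=> s' _ /mark_fact_inj[].
Qed.

Definition enc : inst S -> inst enc_schema :=
  embed val (mark_fact ^~ 1%N) certain_facts.

Lemma TI_fin_enc : TI_fin I -> TI_fin (image_pdb enc I).
Proof.
apply: TI_fin_embed; [exact: val_inj | by move=> s s' /mark_fact_inj[] |].
exact: mark_fact1_notin_certain.
Qed.

Lemma in_enc_mark D s z :
  (mark_fact s z \in enc D) = (z == 0%N) || (z == 1%N) && (val s \in D).
Proof.
rewrite in_embed !in_fsetU; congr orb.
  apply/idP/idP=> [|/eqP->]; last by apply/orP; right; apply: in_imfset.
  case/orP=> [/orP[/orP[]|]|].
  - by case/imfset2P=> W _ [g _ /(congr1 tag)].
  - by case/imfset2P=> W _ [s' _ /(congr1 tag)].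
  - by case/imfset2P=> W _ [s' _ /(congr1 tag)].
  - by case/imfsetP=> s' _ /mark_fact_inj[_ ->].
apply/existsP/andP=> [[s' /andP[/eqP/mark_fact_inj[-> ->] sD]]//|[/eqP-> sD]].
by exists s; rewrite eqxx.
Qed.

Lemma in_enc_out D g w :
  out_fact g w \in enc D <-> exists2 W, W \in worlds I & g \in V W /\ w = widx W.
Proof.
rewrite in_embed !in_fsetU -!orbA; split; last first.
  by case=> W WI [gW ->]; apply/orP; left; apply/imfset2P; exists W => //; exists g.
case/or4P=> [||| /orP[]].
- by case/imfset2P=> W WI [g' g'W /out_fact_inj[-> ->]]; exists W.
- by case/imfset2P=> W _ [s _ /(congr1 tag)].
- by case/imfset2P=> W _ [s _ /(congr1 tag)].
- by case/imfsetP=> s _ /(congr1 tag).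
- by case/existsP=> s /andP[/eqP/(congr1 tag)].
Qed.

Lemma in_enc_guard D s w z :
  guard_fact s w z \in enc D <->
  exists2 W, W \in worlds I & w = widx W /\ (z = 1%N \/ z = 0%N /\ val s \notin W).
Proof.
rewrite in_embed !in_fsetU -!orbA; split; last first.
  case=> W WI [-> [->|[-> sW]]]; apply/orP; right; apply/orP.
    by left; apply/imfset2P; exists W => //; exists s.
  by right; apply/orP; left; apply/imfset2P; exists W => //; exists s; rewrite ?inE.
case/or4P=> [||| /orP[]].
- by case/imfset2P=> W _ [g _ /(congr1 tag)].
- by case/imfset2P=> W WI [s' _ /guard_fact_inj[_ -> ->]]; exists W => //; split=> //; left.
- case/imfset2P=> W WI [s' /[!inE] s'W /guard_fact_inj[-> -> ->]].
  by exists W => //; split=> //; right.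
- by case/imfsetP=> s' _ /(congr1 tag).
- by case/existsP=> s' /andP[/eqP/(congr1 tag)].
Qed.

Lemma enc_guards W D : W \in worlds I ->
  (forall s, exists z, guard_fact s (widx W) z \in enc D /\ mark_fact s z \in enc D) <->
  W `<=` D.
Proof.
move=> WI; split=> [guardsD|WD s].
  apply/fsubsetP=> x xW.
  have xF : x \in world_facts by apply/imfset2P; exists W => //; exists x.
  have [z [/in_enc_guard[W' W'I [/(index_inj W WI W'I) <- zW]]]] := guardsD [` xF].
  by rewrite in_enc_mark; case: zW => [->|[-> /negP]] //=; rewrite andbT.
have [sD|sD] := boolP (val s \in D).
  exists 1%N; rewrite in_enc_mark sD; split=> //.
  by apply/in_enc_guard; exists W => //; split=> //; left.
exists 0%N; rewrite in_enc_mark eqxx; split=> //.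
apply/in_enc_guard; exists W => //; split=> //; right; split=> //.
by apply: contra sD; apply: (fsubsetP WD).
Qed.

Definition guard_cq (n : nat) (s : world_fact) : cq enc_schema :=
  CEx n.+1 (CAnd (@CAtom enc_schema (inr (inl s)) [tuple TVar n; TVar n.+1])
                 (@CAtom enc_schema (inr (inr s)) [tuple TVar n.+1])).

Definition enc_query (r : T) : cq enc_schema :=
  CEx (ar r)
    (CAnd (@CAtom enc_schema (inl r) [tuple of TVar (ar r) :: [tuple TVar i | i < ar r]])
          (cq_all (guard_cq (ar r)) (enum world_fact))).

Lemma enc_query_sjfcq r : sjfcq_formula (ar r) (enc_query r).
Proof.
split.
  rewrite /self_join_free /= rels_cq_all.
  have -> : flatten [seq rels (guard_cq (ar r) s) | s <- enum world_fact] =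
    [seq inr (if b then inr s else inl s) : enc_rel
       | s <- enum world_fact, b <- [:: false; true]] by [].
  rewrite allpairs_uniq ?enum_uniq ?andbT //; last first.
    by move=> [s []] [s' []] _ _ //= [[->]].
  by apply/negP=> /allpairsP[[s b] [_ _ //]].
have -> : fv (enc_query r) =
    [seq y <- ar r :: flatten [seq term_vars (TVar i) | i : 'I_(ar r) <- enum 'I_(ar r)] ++
              fv (cq_all (guard_cq (ar r)) (enum world_fact)) | y != ar r].
  by rewrite /= -map_comp.
move=> x; rewrite mem_filter in_cons => /andP[x_n].
rewrite (negbTE x_n) orFb mem_cat fv_cq_all.
case/orP=> [/flattenP[_ /mapP[i _ ->]]|/flattenP[_ /mapP[s _ ->]]].
  by rewrite inE => /eqP->.
by rewrite mem_filter /= !inE (negbTE x_n) => /andP[/negbTE->].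
Qed.

Lemma sat_guard_cq D dom nu n s :
  sat D dom nu (guard_cq n s) <->
  exists2 z, dom z & guard_fact s (nu n) z \in D /\ mark_fact s z \in D.
Proof.
have nu_n z : upd nu n.+1 z n = nu n by rewrite /upd ltn_eqF.
have nu_Sn z : upd nu n.+1 z n.+1 = z by rewrite /upd eqxx.
split=> -[z dz [guardD markD]]; exists z => //.
  by move: guardD markD; rewrite !Tagged_fact_of /= nu_n nu_Sn; split.
by split; rewrite sat_atom /= ?nu_n nu_Sn.
Qed.

Lemma sat_enc_query D dom g :
  sat D dom (tuple_asg (tagged g)) (enc_query (tag g)) <->
  exists2 w, dom w & out_fact g w \in D /\
    forall s, exists2 z, dom z & guard_fact s w z \in D /\ mark_fact s z \in D.
Proof.
have nu_n w : upd (tuple_asg (tagged g)) (ar (tag g)) w (ar (tag g)) = w.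
  by rewrite /upd eqxx.
split=> -[w dw [outD guardsD]]; exists w => //.
  move: outD; rewrite Tagged_fact_of map_eval_upd_vars => outD; split=> // s.
  by move/sat_cq_all/(_ s (mem_enum _ s))/sat_guard_cq: guardsD; rewrite nu_n.
split; first by rewrite sat_atom map_eval_upd_vars.
by apply/sat_cq_all => s _; apply/sat_guard_cq; rewrite nu_n.
Qed.

(* The witnesses [w] and [z] occur in facts of [D], hence lie in its active domain. *)
Lemma enc_query_view_cond D g :
  cq_view_cond enc_query D g <->
  exists w, out_fact g w \in D /\
    forall s, exists z, guard_fact s w z \in D /\ mark_fact s z \in D.
Proof.
split=> [[_ /sat_enc_query[w _ [outD guardsD]]]|[w [outD guardsD]]].
  by exists w; split=> // s; have [z _ zD] := guardsD s; exists z.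
have in_adom f u : f \in D -> u \in tagged f -> adom_sem D (enc_query (tag g)) u.
  by move=> fD uf; left; exists f.
have size_out : size (w :: tagged g) = ar (inl (tag g) : enc_schema).
  by rewrite /= size_tuple.
split=> [u ug|]; first by apply: in_adom outD _; rewrite mem_fact_of // inE ug orbT.
apply/sat_enc_query; exists w; first by apply: in_adom outD _; rewrite mem_fact_of // inE eqxx.
split=> // s; have [z [guardD markD]] := guardsD s; exists z => //.
by apply: in_adom guardD _; rewrite mem_fact_of // !inE eqxx orbT.
Qed.

Lemma enc_query_enc D g : monotone_view V -> D \in worlds I ->
  cq_view_cond enc_query (enc D) g <-> g \in V D.
Proof.
move=> monoV DI; split=> [|gD].
  case/enc_query_view_cond=> w [/in_enc_out[W WI [gW ->]] /(enc_guards D WI) WD].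
  exact: (fsubsetP (monoV _ _ WD)).
apply/enc_query_view_cond; exists (widx D); split; first by apply/in_enc_out; exists D.
exact/(enc_guards D DI)/fsubset_refl.
Qed.

Lemma enc_view (V' : inst enc_schema -> inst T) :
  (forall D g, g \in V' D <-> cq_view_cond enc_query D g) -> monotone_view V ->
  {in worlds I, forall D, V' (enc D) = V D}.
Proof.
move=> V'E monoV D DI; apply/fsetP=> g.
by apply/idP/idP=> [/V'E/(enc_query_enc g monoV DI)|/(enc_query_enc g monoV DI)/V'E].
Qed.

End Encoding.

Theorem proposition7p3 (R : realType) (S T : schema) (I : fpdb R (inst S))
  (V : inst S -> inst T) :
  TI_fin I -> monotone_view V -> in_sjfCQ_TIfin (image_pdb V I).
Proof.
move=> TI_I monoV.
have [V' V'E] := cq_view_exists (@enc_query R S T I).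
exists (enc_schema T I), (image_pdb (enc I V) I), V'; split; [|split].
- exact: TI_fin_enc.
- by exists (@enc_query R S T I); split=> [r|]; [exact: enc_query_sjfcq | exact: V'E].
- move=> J; rewrite /pr !prE_image; apply: eq_prE => D DI /=.
  by rewrite (enc_view V'E monoV DI).
Qed.
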